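(* Let $|\psi\rangle$ be a pure state of a multi-qudit system and $|c_\psi|=\max_{|\phi\rangle}|\langle\psi|\phi\rangle|$, the maximum over pure stabilizer states $|\phi\rangle$ of the same system. For all $\alpha\in(0,1)\cup(1,\infty)$ and $\beta\in(-\infty,0)\cup(0,\infty)$, $$M_{\alpha,\beta}(|\psi\rangle\langle\psi|)=\frac{1}{(1-\alpha)\beta}\left\{\left[\Big(\frac{1+|c_\psi|}{2}\Big)^{\alpha}+\Big(\frac{1-|c_\psi|}{2}\Big)^{\alpha}\right]^{\beta}-1\right\}.$$
   Context: Stabilizer formalism: for a qudit $\mathbb C^d$ with basis $\{|j\rangle\}_{j\in\mathbb Z_d}$, let $X|j\rangle=|j+1\bmod d\rangle$, $Z|j\rangle=\omega^j|j\rangle$, $\omega=e^{2\pi i/d}$, $T_u=\tau^{-u_1u_2}Z^{u_1}X^{u_2}$, $\tau=e^{(d+1)\pi i/d}$; on $n$ qudits Heisenberg–Weyl operators are tensor products of these. Clifford unitaries $V$ satisfy: for every $T_u$ there are $u',\theta$ with $VT_uV^\dagger=e^{i\theta}T_{u'}$. Pure stabilizer states are $V|0\cdots0\rangle$, $V$ Clifford. For $\alpha\in(0,1)\cup(1,\infty)$, $\beta\in(-\infty,0)\cup(0,\infty)$: $S_{\alpha,\beta}(\rho)=\frac{1}{(1-\alpha)\beta}[(\mathrm{Tr}\rho^\alpha)^\beta-1]$, $J_{\alpha,\beta}(\rho,\sigma)=S_{\alpha,\beta}(\tfrac{\rho+\sigma}{2})-\tfrac12S_{\alpha,\beta}(\rho)-\tfrac12S_{\alpha,\beta}(\sigma)$,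 and for a pure state $M_{\alpha,\beta}(|\psi\rangle\langle\psi|)=\min_{|\phi\rangle}J_{\alpha,\beta}(|\psi\rangle\langle\psi|,|\phi\rangle\langle\phi|)$, minimum over pure stabilizer states $|\phi\rangle$ of the same system. *)

From HB Require Import structures.
From mathcomp Require Import all_boot all_order all_algebra.
From mathcomp Require Import all_classical all_reals all_analysis.
From mathcomp Require Import complex.
Set Implicit Arguments. Unset Strict Implicit. Unset Printing Implicit Defensive.
Import Order.TTheory GRing.Theory Num.Theory.
Local Open Scope ring_scope.
Local Open Scope classical_set_scope.

Section Stab.
Variable R : realType.
Local Notation C := (R[i]).

Definition toC (x : R) : C := Complex x 0.
Definition cabs (z : C) : R := Normc.normc z.
Definition expi (t : R) : C := Complex (cos t) (sin t).

Definition omega (d : nat) : C := expi (2 * pi / d%:R).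
Definition tau (d : nat) : C := expi ((d.+1)%:R * pi / d%:R).

Definition adj m n (A : 'M[C]_(m, n)) : 'M[C]_(n, m) := (map_mx (@conjc R) A)^T.

Definition unitary N (U : 'M[C]_N) : Prop := U *m adj U = 1%:M.

(* Computational basis of n qudits: index j < d^n, the k-th qudit value is the
   k-th base-d digit of j; so index 0 is |0...0>. *)
Definition digit (d j k : nat) : nat := ((j %/ d ^ k) %% d)%N.

(* single-qudit matrix element <a| T_(u1,u2) |b>,
   T_u = tau^{-u1 u2} Z^{u1} X^{u2}, with Z^{u1} X^{u2} |b> = omega^{u1 (b+u2)} |b+u2 mod d> *)
Definition hw1 (d u1 u2 a b : nat) : C :=
  (tau d) ^- (u1 * u2) * (omega d) ^+ (u1 * a) * (a == (b + u2) %% d)%N%:R.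

(* n-qudit Heisenberg-Weyl operator T_u = T_{u_1} (x) ... (x) T_{u_n},
   u given by its two component vectors u1, u2 in Z_d^n *)
Definition HW (n d : nat) (u1 u2 : 'I_n -> 'I_d) : 'M[C]_(d ^ n) :=
  \matrix_(j, k) \prod_(s < n) hw1 d (u1 s) (u2 s) (digit d j s) (digit d k s).

Definition clifford (n d : nat) (V : 'M[C]_(d ^ n)) : Prop :=
  unitary V /\
  forall u1 u2 : 'I_n -> 'I_d, exists (v1 v2 : 'I_n -> 'I_d) (theta : R),
    V *m HW u1 u2 *m adj V = expi theta *: HW v1 v2.

Definition ket0 (N : nat) : 'cV[C]_N := \col_j ((val j == 0%N)%:R).

Definition stabilizer_state (n d : nat) (phi : 'cV[C]_(d ^ n)) : Prop :=
  exists V : 'M[C]_(d ^ n), clifford V /\ phi = V *m ket0 (d ^ n).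

Definition inner N (psi phi : 'cV[C]_N) : C := (adj psi *m phi) 0 0.

Definition pure_state N (psi : 'cV[C]_N) : Prop := inner psi psi = 1.

Definition ketbra N (psi : 'cV[C]_N) : 'M[C]_N := psi *m adj psi.

Definition spectrum_of N (A : 'M[C]_N) (l : 'I_N -> R) : Prop :=
  exists U : 'M[C]_N, unitary U /\
    A = U *m diag_mx (\row_i toC (l i)) *m adj U.

Definition trpow N (alpha : R) (A : 'M[C]_N) : R :=
  xget 0 [set t : R | exists l, spectrum_of A l /\ (forall i, 0 <= l i) /\
                          t = \sum_i (l i) `^ alpha].

Definition S_ab N (alpha beta : R) (rho : 'M[C]_N) : R :=
  ((trpow alpha rho) `^ beta - 1) / ((1 - alpha) * beta).

Definition J_ab N (alpha beta : R) (rho sigma : 'M[C]_N) : R :=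
  S_ab alpha beta ((1 / 2 : C) *: (rho + sigma))
  - S_ab alpha beta rho / 2 - S_ab alpha beta sigma / 2.

End Stab.
Arguments stabilizer_state {R} n d phi.
Arguments clifford {R} n d V.

(* For pure states the entropy S vanishes, so J(psi, phi) is the entropy of the
   equal mixture of |psi><psi| and |phi><phi|.  After rotating the phase of phi
   so that <psi|phi> = |<psi|phi>| =: x, this mixture is diagonal in the
   orthonormal basis (psi +- phi)/|psi +- phi| with eigenvalues (1 +- x)/2; the
   value Tr rho^alpha does not depend on the chosen diagonalisation because the
   eigenvalues are the roots of the characteristic polynomial.  Hence
   J(psi, phi) = h(x) with h(x) = ([((1+x)/2)^alpha + ((1-x)/2)^alpha]^beta - 1)
   / ((1-alpha) beta).  For y >= x the pair ((1+x)/2, (1-x)/2) is an average of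
   the two orderings of ((1+y)/2, (1-y)/2), so by Jensen the power sum increases
   with x when alpha > 1 and decreases when alpha < 1; in both cases h is
   decreasing, and the minimum over stabilizer states is reached at the maximal
   overlap c. *)

From HB Require Import structures.
From mathcomp Require Import all_boot all_order all_algebra.
From mathcomp Require Import all_classical all_reals all_analysis.
From mathcomp Require Import complex ring lra spectral.
Set Implicit Arguments. Unset Strict Implicit. Unset Printing Implicit Defensive.
Import Order.TTheory GRing.Theory Num.Theory.
Local Open Scope ring_scope.

HB.instance Definition _ (R : realType) := GRing.RMorphism.copy (@toC R) (real_complex R).

Section InnerProduct.
Variable R : realType.
Local Notation C := R[i].

(* Restatements in terms of [conjc] and [toC]: the generic morphism lemmas leave
   canonical-structure projections on which later rewrites do not match. *)
Lemma conjc_toC (x : R) : conjc (toC x) = toC x. Proof. exact: conjc_real. Qed.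

Lemma conjc_ge0 (z : C) : 0 <= z -> conjc z = z. Proof. exact: geC0_conj. Qed.

Lemma conjcM (x y : C) : conjc (x * y) = conjc x * conjc y. Proof. exact: rmorphM. Qed.

Lemma conjcV (x : C) : conjc x^-1 = (conjc x)^-1. Proof. exact: fmorphV. Qed.

Lemma ler_toC (x y : R) : (toC x <= toC y) = (x <= y). Proof. exact: lecR. Qed.

Lemma cabs_ge0 (z : C) : 0 <= cabs z.
Proof. by case: z => a b; apply: sqrtr_ge0. Qed.

Lemma mulc_conj (z : C) : z * conjc z = toC (cabs z ^+ 2).
Proof.
case: z => a b; rewrite /cabs /= sqr_sqrtr ?addr_ge0 ?sqr_ge0 //.
by apply/eqP; rewrite eq_complex /=; apply/andP; split; apply/eqP; ring.
Qed.

Lemma conjc_mul_ge0 (z : C) : 0 <= conjc z * z.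
Proof. by rewrite mulrC mul_conjC_ge0. Qed.

Lemma innerE N (u v : 'cV[C]_N) : inner u v = \sum_t conjc (u t 0) * v t 0.
Proof. by rewrite /inner !mxE; apply: eq_bigr => t _; rewrite !mxE. Qed.

Lemma innerDr N (u v w : 'cV[C]_N) : inner u (v + w) = inner u v + inner u w.
Proof. by rewrite !innerE -big_split; apply: eq_bigr => t _; rewrite !mxE mulrDr. Qed.

Lemma innerZr N (u v : 'cV[C]_N) a : inner u (a *: v) = a * inner u v.
Proof. by rewrite !innerE mulr_sumr; apply: eq_bigr => t _; rewrite !mxE mulrCA. Qed.

Lemma inner_conj N (u v : 'cV[C]_N) : inner v u = conjc (inner u v).
Proof.
rewrite !innerE rmorph_sum; apply: eq_bigr => t _.
by rewrite rmorphM /= conjcK mulrC.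
Qed.

Lemma innerDl N (u v w : 'cV[C]_N) : inner (v + w) u = inner v u + inner w u.
Proof. by rewrite inner_conj innerDr rmorphD /= -!inner_conj. Qed.

Lemma innerZl N (u v : 'cV[C]_N) a : inner (a *: v) u = conjc a * inner v u.
Proof. by rewrite inner_conj innerZr conjcM -inner_conj. Qed.

Lemma innerNr N (u v : 'cV[C]_N) : inner u (- v) = - inner u v.
Proof. by rewrite -scaleN1r innerZr mulN1r. Qed.

Lemma innerNl N (u v : 'cV[C]_N) : inner (- v) u = - inner v u.
Proof. by rewrite -scaleN1r innerZl rmorphN1 mulN1r. Qed.

Lemma inner_ge0 N (u : 'cV[C]_N) : 0 <= inner u u.
Proof. by rewrite innerE sumr_ge0 // => t _; apply: conjc_mul_ge0. Qed.

Lemma inner_eq0 N (u : 'cV[C]_N) : inner u u = 0 -> u = 0.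
Proof.
rewrite innerE => /eqP; rewrite psumr_eq0 => [/allP u0|t _]; last exact: conjc_mul_ge0.
apply/matrixP => t j; rewrite [j]ord1 mxE.
by move/implyP: (u0 t (mem_index_enum t)) => /(_ isT); rewrite mulrC mul_conjC_eq0 => /eqP.
Qed.

Lemma adjK m n (A : 'M[C]_(m, n)) : adj (adj A) = A.
Proof. by apply/matrixP => a b; rewrite !mxE conjcK. Qed.

Lemma adjM m n p (A : 'M[C]_(m, n)) (B : 'M[C]_(n, p)) : adj (A *m B) = adj B *m adj A.
Proof. by rewrite /adj map_mxM trmx_mul. Qed.

Lemma adj_trmxC m n (A : 'M[C]_(m, n)) : adj A = (A ^t*)%sesqui.
Proof. by rewrite /adj map_trmx. Qed.

Lemma ketbraE N (v : 'cV[C]_N) a b : ketbra v a b = v a 0 * conjc (v b 0).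
Proof. by rewrite !mxE big_ord1 !mxE. Qed.

Lemma ketbraZ N (v : 'cV[C]_N) a : ketbra (a *: v) = (a * conjc a) *: ketbra v.
Proof. by apply/matrixP => i j; rewrite ketbraE [RHS]mxE ketbraE !mxE rmorphM /=; ring. Qed.

Lemma inner_residual N (psi phi : 'cV[C]_N) : inner psi psi = 1 -> inner phi phi = 1 ->
  let w := phi - inner psi phi *: psi in
  inner w w = toC (1 - cabs (inner psi phi) ^+ 2).
Proof.
move=> psi1 phi1 w; rewrite /w innerDl !innerDr !innerNl !innerNr !innerZl !innerZr.
by rewrite psi1 phi1 (inner_conj psi phi) rmorphB rmorph1 /= -mulc_conj; ring.
Qed.

Lemma cabs_inner_le1 N (psi phi : 'cV[C]_N) : inner psi psi = 1 -> inner phi phi = 1 ->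
  cabs (inner psi phi) <= 1.
Proof.
move=> psi1 phi1; have := inner_ge0 (phi - inner psi phi *: psi).
rewrite inner_residual // -(rmorph0 (@toC R)) ler_toC.
by have := cabs_ge0 (inner psi phi); nra.
Qed.

Lemma cabs_inner_eq1 N (psi phi : 'cV[C]_N) : inner psi psi = 1 -> inner phi phi = 1 ->
  cabs (inner psi phi) = 1 -> phi = inner psi phi *: psi.
Proof.
move=> psi1 phi1 overlap1; apply/eqP; rewrite -subr_eq0; apply/eqP/inner_eq0.
by rewrite inner_residual // overlap1 expr1n subrr rmorph0.
Qed.

End InnerProduct.


Section PowerSums.
Variable R : realType.
Implicit Types p t x y : R.

Lemma powR_convex_comb p t x y : 1 <= p -> 0 <= t <= 1 -> 0 <= x -> 0 <= y ->
  (t * x + (1 - t) * y) `^ p <= t * x `^ p + (1 - t) * y `^ p.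
Proof.
move=> p1 /andP[t0 t1] x0 y0.
have t01 : Itv.spec (@Itv.num_sem R) (Itv.Real `[0%Z, 1%Z]) t.
  by rewrite /Itv.spec /= /Itv.num_sem /= in_itv /= ger0_real //= t0 t1.
have := @convex_powR R p p1 (Itv.mk t01) x y.
by rewrite !inE /= !in_itv /= !andbT !convRE => /(_ x0 y0).
Qed.

Lemma powR_concave_comb p t x y : 0 < p <= 1 -> 0 <= t <= 1 -> 0 <= x -> 0 <= y ->
  t * x `^ p + (1 - t) * y `^ p <= (t * x + (1 - t) * y) `^ p.
Proof.
move=> /andP[p0 p1] t01 x0 y0; have /andP[t0 t1] := t01.
have p_inv_ge1 : 1 <= p^-1 by rewrite invf_ge1.
have := powR_convex_comb p_inv_ge1 t01 (powR_ge0 x p) (powR_ge0 y p).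
rewrite -!powRrM !mulfV ?gt_eqF // !powRr1 // => comb_le.
have comb_ge0 : 0 <= t * x `^ p + (1 - t) * y `^ p.
  by rewrite addr_ge0 ?mulr_ge0 ?powR_ge0 ?subr_ge0.
have := @ge0_ler_powR R p (ltW p0) _ _ _ _ comb_le.
rewrite -powRrM mulVf ?gt_eqF // powRr1 //.
by apply; rewrite nnegrE ?powR_ge0 // addr_ge0 ?mulr_ge0 ?subr_ge0.
Qed.

(* The pair ((1+x)/2, (1-x)/2) is obtained from ((1+y)/2, (1-y)/2) by the
   doubly stochastic averaging with weight t = (x+y)/(2y). *)
Lemma convex_pair_sum_le (f : R -> R) x y :
  (forall t a b, 0 <= t <= 1 -> 0 <= a -> 0 <= b ->
     f (t * a + (1 - t) * b) <= t * f a + (1 - t) * f b) ->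
  0 <= x <= y -> y <= 1 ->
  f ((1 + x) / 2) + f ((1 - x) / 2) <= f ((1 + y) / 2) + f ((1 - y) / 2).
Proof.
move=> f_convex /andP[x0 xy] y1.
have [y_le0|y0] := leP y 0; first by have -> : x = y by lra.
pose t := (x + y) / (2 * y).
have t01 : 0 <= t <= 1.
  by rewrite divr_ge0 ?ler_pdivrMr ?mulr_gt0 ?mul1r /=; lra.
have a0 : 0 <= (1 + y) / 2 by lra.
have b0 : 0 <= (1 - y) / 2 by lra.
have -> : (1 + x) / 2 = t * ((1 + y) / 2) + (1 - t) * ((1 - y) / 2).
  by rewrite /t; field; rewrite gt_eqF.
have -> : (1 - x) / 2 = t * ((1 - y) / 2) + (1 - t) * ((1 + y) / 2).
  by rewrite /t; field; rewrite gt_eqF.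
have -> : f ((1 + y) / 2) + f ((1 - y) / 2) =
    (t * f ((1 + y) / 2) + (1 - t) * f ((1 - y) / 2))
    + (t * f ((1 - y) / 2) + (1 - t) * f ((1 + y) / 2)) by ring.
by apply: lerD; apply: f_convex.
Qed.

Definition overlap_trpow p x := ((1 + x) / 2) `^ p + ((1 - x) / 2) `^ p.

Lemma overlap_trpow_gt0 p x : 0 <= x <= 1 -> 0 < overlap_trpow p x.
Proof.
move=> /andP[x0 x1]; rewrite /overlap_trpow.
by rewrite ltr_wpDr ?powR_ge0 // powR_gt0 //; lra.
Qed.

Lemma overlap_trpow_homo p x y : 1 <= p -> 0 <= x <= y -> y <= 1 ->
  overlap_trpow p x <= overlap_trpow p y.
Proof.
move=> p1; rewrite /overlap_trpow.
by apply: (convex_pair_sum_le (f := fun z => z `^ p)) => t a b; apply: powR_convex_comb.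
Qed.

Lemma overlap_trpow_nhomo p x y : 0 < p <= 1 -> 0 <= x <= y -> y <= 1 ->
  overlap_trpow p y <= overlap_trpow p x.
Proof.
move=> p01 xy y1; rewrite -lerN2 /overlap_trpow !opprD.
apply: (convex_pair_sum_le (f := fun z => - z `^ p)) => // t a b t01 a0 b0.
by rewrite !mulrN -opprD lerN2 powR_concave_comb.
Qed.

Lemma powR_sub_div_ge0 (b u v : R) : b != 0 -> 0 < v <= u ->
  0 <= (u `^ b - v `^ b) / b.
Proof.
move=> b_neq0 /andP[v0 vu]; have u0 := lt_le_trans v0 vu.
have [b_lt0|b_gt0|b_eq0] := ltgtP b 0; last by rewrite b_eq0 eqxx in b_neq0.
- have -> : (u `^ b - v `^ b) / b = (v `^ b - u `^ b) / - b.
    by rewrite invrN mulrN -mulNr opprB.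
  rewrite divr_ge0 ?subr_ge0 ?oppr_ge0 ?(ltW b_lt0) //.
  rewrite -[b]opprK (powRN u) (powRN v) lef_pV2 ?posrE ?powR_gt0 //.
  by apply: ge0_ler_powR; rewrite ?nnegrE ?oppr_ge0 ?(ltW b_lt0) ?(ltW v0) ?(ltW u0).
- rewrite divr_ge0 ?subr_ge0 ?(ltW b_gt0) //.
  by apply: ge0_ler_powR; rewrite ?nnegrE ?(ltW b_gt0) ?(ltW v0) ?(ltW u0).
Qed.

Lemma overlap_trpow1 p : p != 0 -> overlap_trpow p 1 = 1.
Proof.
move=> p_neq0; rewrite /overlap_trpow subrr mul0r powR0 // addr0.
by rewrite divff ?pnatr_eq0 // powR1.
Qed.

Definition overlap_entropy (a b : R) x := (overlap_trpow a x `^ b - 1) / ((1 - a) * b).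

Lemma overlap_entropy_nhomo (a b : R) x y : 0 < a -> a != 1 -> b != 0 ->
  0 <= x <= y -> y <= 1 -> overlap_entropy a b y <= overlap_entropy a b x.
Proof.
move=> a0 a_neq1 b_neq0 /andP[x0 xy] y1.
have x01 : 0 <= x <= 1 by rewrite x0 (le_trans xy y1).
have y01 : 0 <= y <= 1 by rewrite y1 (le_trans x0 xy).
have Gx0 := overlap_trpow_gt0 a x01; have Gy0 := overlap_trpow_gt0 a y01.
have -> : overlap_entropy a b y = overlap_entropy a b x
    - (overlap_trpow a x `^ b - overlap_trpow a y `^ b) / b / (1 - a).
  rewrite /overlap_entropy.
  move: (overlap_trpow a x `^ b) (overlap_trpow a y `^ b) => X Y.
  by field; rewrite b_neq0 subr_eq0 eq_sym a_neq1.
rewrite gerBl.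
have [a_lt1|a_gt1|a_eq1] := ltgtP a 1; last by rewrite a_eq1 eqxx in a_neq1.
- have GyGx : overlap_trpow a y <= overlap_trpow a x.
    by apply: overlap_trpow_nhomo; rewrite ?a0 ?(ltW a_lt1) ?x0.
  by rewrite divr_ge0 ?subr_ge0 ?(ltW a_lt1) // powR_sub_div_ge0 ?Gy0.
- have GxGy : overlap_trpow a x <= overlap_trpow a y.
    by apply: overlap_trpow_homo; rewrite ?(ltW a_gt1) ?x0.
  rewrite -mulrNN -invrN opprB -mulNr opprB.
  by rewrite divr_ge0 ?subr_ge0 ?(ltW a_gt1) // powR_sub_div_ge0 ?Gx0.
Qed.

End PowerSums.


Section Spectrum.
Variable R : realType.
Local Notation C := R[i].

Lemma char_poly_unitary_conj N (U D : 'M[C]_N) : unitary U ->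
  char_poly (U *m D *m adj U) = char_poly D.
Proof.
move=> U_unitary; set P := map_mx polyC U; set Q := map_mx polyC (adj U).
have PQ : P *m Q = 1%:M by rewrite -map_mxM U_unitary map_mx1.
have conj_char_poly_mx : char_poly_mx (U *m D *m adj U) = P *m char_poly_mx D *m Q.
  rewrite /char_poly_mx mulmxBr mulmxBl mul_mx_scalar -scalemxAl PQ.
  by rewrite -!map_mxM scalemx1.
by rewrite /char_poly conj_char_poly_mx !det_mulmx mulrAC -det_mulmx PQ det1 mul1r.
Qed.

Lemma spectrum_char_poly N (A : 'M[C]_N) l : spectrum_of A l ->
  char_poly A = \prod_(x <- [seq toC (l i) | i <- enum 'I_N]) ('X - x%:P).
Proof.
case=> U [U_unitary ->]; rewrite char_poly_unitary_conj // char_poly_trig ?diag_mx_is_trig //.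
rewrite big_map big_enum /=; apply: eq_bigr => i _.
by rewrite !mxE eqxx mulr1n.
Qed.

Lemma spectrum_perm_eq N (A : 'M[C]_N) l l' : spectrum_of A l -> spectrum_of A l' ->
  perm_eq [seq l i | i <- enum 'I_N] [seq l' i | i <- enum 'I_N].
Proof.
move=> /spectrum_char_poly Al /spectrum_char_poly; rewrite Al => /prod_XsubC_eq.
by move/(perm_map (@complex.Re R)); rewrite -!map_comp.
Qed.

Lemma trpow_spectrum N (alpha : R) (A : 'M[C]_N) l : spectrum_of A l ->
  (forall i, 0 <= l i) -> trpow alpha A = \sum_i (l i) `^ alpha.
Proof.
move=> Al l_ge0; rewrite /trpow; case: xgetP => [t _ [l' [Al' [_ ->]]]|]; last first.
  by move=> /(_ (\sum_i (l i) `^ alpha)) []; exists l.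
have sum_map (m : 'I_N -> R) :
    \sum_i m i `^ alpha = \sum_(x <- [seq m i | i <- enum 'I_N]) x `^ alpha.
  by rewrite big_map big_enum.
by rewrite !sum_map; apply: perm_big; apply: spectrum_perm_eq Al' Al.
Qed.

Lemma dotmxE_sum n (u v : 'rV[C]_n) : dotmx u v = \sum_j u 0 j * conjc (v 0 j).
Proof. by rewrite dotmxE !mxE; apply: eq_bigr => j _; rewrite !mxE. Qed.

Lemma unitarymx_row_expand N (U : 'M[C]_N) (u : 'rV[C]_N) : U \is unitarymx ->
  u = \sum_k dotmx u (row k U) *: row k U.
Proof.
move=> /unitarymxP /mulmx1C UU; rewrite -{1}(mulmx1 u) -UU mulmxA mulmx_sum_row.
apply: eq_bigr => k _; congr (_ *: _).
by rewrite dotmxE_sum !mxE; apply: eq_bigr => j _; rewrite !mxE.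
Qed.

Lemma dotmx_row_schmidt_gt N (A : 'M[C]_N) (i k : 'I_N) : (i < k)%N ->
  dotmx (row i A) (row k (schmidt A)) = 0.
Proof.
move=> ik; have S_orthonormal := row_unitarymxP (schmidt_unitarymx A (leqnn N)).
have : (row i A <= kermx (row k (schmidt A) ^t*)%sesqui)%MS.
  apply: submx_trans (row_schmidt_sub A i) _; apply/sumsmx_subP => j ji.
  rewrite genmxE; apply/sub_kermxP; apply/rowP => z; rewrite !mxE.
  have jk : j != k by rewrite neq_ltn (leq_ltn_trans ji ik).
  move: (S_orthonormal j k); rewrite (negbTE jk) /= mulr0n dotmxE_sum => jk_orth.
  by rewrite -[RHS]jk_orth; apply: eq_bigr => t _; rewrite !mxE.
move/sub_kermxP/rowP/(_ 0); rewrite !mxE => <-.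
by rewrite dotmxE_sum; apply: eq_bigr => j _; rewrite !mxE.
Qed.

(* Gram-Schmidt leaves an orthonormal prefix of rows unchanged: row i of A lies
   in the span of rows k <= i of schmidt A, is orthogonal to rows k < i (which
   are rows of A by induction), and has a nonnegative unit coefficient on row i. *)
Lemma row_schmidt_prefix N m (A : 'M[C]_N) (i : 'I_N) :
  (forall j k : 'I_N, (j < m)%N -> (k < m)%N -> dotmx (row j A) (row k A) = (j == k)%:R) ->
  (i < m)%N -> row i (schmidt A) = row i A.
Proof.
move=> A_orthonormal; case: i => i ltiN; elim/ltn_ind: i ltiN => i IH ltiN im.
set i' := Ordinal ltiN; set S := schmidt A; set c := dotmx (row i' A) (row i' S).
have rowA : row i' A = c *: row i' S.
  rewrite {1}(unitarymx_row_expand (row i' A) (schmidt_unitarymx A (leqnn N))).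
  rewrite (bigD1 i') //= big1 ?addr0 // => -[j ltjN]; rewrite -val_eqE /= neq_ltn.
  case/orP => [ji|ij]; last by rewrite dotmx_row_schmidt_gt ?scale0r.
  have jm := ltn_trans ji im.
  by rewrite IH // A_orthonormal // -val_eqE /= (gtn_eqF ji) scale0r.
have c_ge0 : 0 <= c := form1_row_schmidt A i'.
have c_sqr : c ^+ 2 = 1.
  have := A_orthonormal i' i' im im; rewrite eqxx /= mulr1n => <-.
  by rewrite [X in dotmx _ X]rowA linearZr_LR /= -/c (geC0_conj c_ge0).
by move/eqP: c_sqr; rewrite sqrp_eq1 // => /eqP c1; rewrite rowA c1 scale1r.
Qed.

Definition orthonormal_family N m (v : nat -> 'cV[C]_N) :=
  forall k k', (k < m)%N -> (k' < m)%N -> inner (v k) (v k') = (k == k')%:R.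

Lemma orthonormal_family_le N m (v : nat -> 'cV[C]_N) : orthonormal_family m v -> (m <= N)%N.
Proof.
move=> v_orthonormal; pose M : 'M[C]_(m, N) := \matrix_(i, j) conjc (v i j 0).
have M_unitary : M \is unitarymx.
  apply/row_unitarymxP => i j; rewrite dotmxE_sum -val_eqE /= -v_orthonormal // innerE.
  by apply: eq_bigr => t _; rewrite !mxE conjcK.
by rewrite -(mxrank_unitary M_unitary) rank_leq_col.
Qed.

(* The eigenbasis is obtained by completing the orthonormal family to an
   orthonormal basis, running Gram-Schmidt on the matrix whose first m rows are
   the adjoints of the v k. *)
Lemma spectrum_of_orthonormal_sum N m (v : nat -> 'cV[C]_N) (l : nat -> R) :
  orthonormal_family m v ->
  spectrum_of (\sum_(k < m) toC (l k) *: ketbra (v k))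
              (fun i : 'I_N => if (i < m)%N then l i else 0).
Proof.
move=> v_orthonormal; have mN := orthonormal_family_le v_orthonormal.
pose A : 'M[C]_N := \matrix_(i, j) if (i < m)%N then conjc (v i j 0) else 0.
have A_orthonormal (i j : 'I_N) : (i < m)%N -> (j < m)%N ->
    dotmx (row i A) (row j A) = (i == j)%:R.
  move=> im jm; rewrite dotmxE_sum -val_eqE /= -v_orthonormal // innerE.
  by apply: eq_bigr => t _; rewrite !mxE im jm conjcK.
have S_unitary := schmidt_unitarymx A (leqnn N).
exists (adj (schmidt A)); split.
  by rewrite /unitary adjK adj_trmxC; apply/mulmx1C/unitarymxP.
rewrite adjK; apply/matrixP => a b; rewrite summxE mxE mul_mx_diag.
rewrite (big_ord_widen N (fun k => (toC (l k) *: ketbra (v k)) a b) mN).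
rewrite big_mkcond /=; apply: eq_bigr => j _; rewrite !mxE.
case: ifP => jm; last by rewrite rmorph0 mulr0 mul0r.
have /rowP rowS := row_schmidt_prefix A_orthonormal jm.
move: (rowS a) (rowS b); rewrite !mxE jm => -> ->.
by rewrite big_ord1 !mxE conjcK; ring.
Qed.

Lemma trpow_orthonormal_sum N m (v : nat -> 'cV[C]_N) (l : nat -> R) (alpha : R) :
  alpha != 0 -> orthonormal_family m v -> (forall k, (k < m)%N -> 0 <= l k) ->
  trpow alpha (\sum_(k < m) toC (l k) *: ketbra (v k)) = \sum_(k < m) (l k) `^ alpha.
Proof.
move=> alpha_neq0 v_orthonormal l_ge0.
rewrite (trpow_spectrum alpha (spectrum_of_orthonormal_sum l v_orthonormal)); last first.
  by move=> i; case: ifP => // /l_ge0.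
rewrite (big_ord_widen _ (fun k => l k `^ alpha) (orthonormal_family_le v_orthonormal)).
rewrite big_mkcond [RHS]big_mkcond /=.
by apply: eq_bigr => i _; case: ifP => //; rewrite powR0.
Qed.

Lemma trpow_ketbra N (v : 'cV[C]_N) (alpha : R) : alpha != 0 -> inner v v = 1 ->
  trpow alpha (ketbra v) = 1.
Proof.
move=> alpha_neq0 v1.
have := @trpow_orthonormal_sum N 1 (fun _ => v) (fun _ => 1) alpha alpha_neq0.
rewrite !big_ord1 rmorph1 scale1r powR1 => -> //.
by move=> [|//] [|//] _ _; rewrite v1.
Qed.

End Spectrum.


Section Mixture.
Variable R : realType.
Local Notation C := R[i].

Definition normalize N (w : 'cV[C]_N) := (sqrtC (inner w w))^-1 *: w.

Lemma inner_normalize N (w : 'cV[C]_N) : inner w w != 0 ->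
  inner (normalize w) (normalize w) = 1.
Proof.
move=> w_neq0; have s_ge0 : 0 <= (sqrtC (inner w w))^-1.
  by rewrite invr_ge0 sqrtC_ge0 inner_ge0.
rewrite innerZl innerZr (conjc_ge0 s_ge0) mulrA -invfM -expr2 sqrtCK.
by rewrite mulVf.
Qed.

Lemma inner_normalize_eq0 N (u w : 'cV[C]_N) : inner u w = 0 ->
  inner (normalize u) (normalize w) = 0.
Proof. by move=> uw0; rewrite innerZl innerZr uw0 !mulr0. Qed.

Lemma ketbra_normalize N (w : 'cV[C]_N) :
  ketbra (normalize w) = (inner w w)^-1 *: ketbra w.
Proof.
have s_ge0 : 0 <= (sqrtC (inner w w))^-1 by rewrite invr_ge0 sqrtC_ge0 inner_ge0.
by rewrite ketbraZ (conjc_ge0 s_ge0) -invfM -expr2 sqrtCK.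
Qed.

Lemma ketbra_parallelogram N (u w : 'cV[C]_N) :
  ketbra (u + w) + ketbra (u - w) = 2%:R *: (ketbra u + ketbra w).
Proof.
by apply/matrixP => i j; rewrite !mxE !big_ord1 !mxE rmorphB rmorphD /=; ring.
Qed.

Section RealOverlap.
Variables (N : nat) (psi phi : 'cV[C]_N) (r : R).
Hypotheses (psi1 : inner psi psi = 1) (phi1 : inner phi phi = 1).
Hypotheses (overlap : inner psi phi = toC r) (r_ge0 : 0 <= r) (r_lt1 : r < 1).

Let overlap_sym : inner phi psi = toC r.
Proof. by rewrite inner_conj overlap conjc_toC. Qed.

Lemma inner_sum_sum : inner (psi + phi) (psi + phi) = toC (2 * (1 + r)).
Proof.
rewrite innerDl !innerDr psi1 phi1 overlap overlap_sym.
by rewrite !rmorphM !rmorphD !rmorph1 /=; ring.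
Qed.

Lemma inner_diff_diff : inner (psi - phi) (psi - phi) = toC (2 * (1 - r)).
Proof.
rewrite innerDl !innerDr !innerNl !innerNr psi1 phi1 overlap overlap_sym.
by rewrite !rmorphM !rmorphB !rmorphD !rmorph1 /=; ring.
Qed.

Lemma inner_sum_diff : inner (psi + phi) (psi - phi) = 0.
Proof. by rewrite innerDl !innerDr !innerNr psi1 phi1 overlap overlap_sym; ring. Qed.

Definition mix_eigvec k := normalize (if k == 0%N then psi + phi else psi - phi).

Definition mix_eigval k := if k == 0%N then (1 + r) / 2 else (1 - r) / 2.

Let sum_gt0 : 0 < 1 + r. Proof. by rewrite (lt_le_trans ltr01) // lerDl. Qed.

Let diff_gt0 : 0 < 1 - r. Proof. by rewrite subr_gt0. Qed.

Lemma mix_eigvec_orthonormal : orthonormal_family 2 mix_eigvec.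
Proof.
have sum_neq0 : inner (psi + phi) (psi + phi) != 0.
  by rewrite inner_sum_sum fmorph_eq0 mulf_neq0 ?pnatr_eq0 ?gt_eqF.
have diff_neq0 : inner (psi - phi) (psi - phi) != 0.
  by rewrite inner_diff_diff fmorph_eq0 mulf_neq0 ?pnatr_eq0 ?gt_eqF.
move=> [|[|//]] [|[|//]] _ _; rewrite /mix_eigvec /=.
- by rewrite inner_normalize.
- exact: inner_normalize_eq0 inner_sum_diff.
- by apply: inner_normalize_eq0; rewrite inner_conj inner_sum_diff rmorph0.
- by rewrite inner_normalize.
Qed.

Lemma mix_eigen_decomposition : (1 / 2 : C) *: (ketbra psi + ketbra phi) =
  \sum_(k < 2) toC (mix_eigval k) *: ketbra (mix_eigvec k).
Proof.
rewrite big_ord_recl big_ord1 /mix_eigvec /mix_eigval /= !ketbra_normalize.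
rewrite inner_sum_sum inner_diff_diff !scalerA -!fmorphV -!rmorphM /=.
have quarter (s : R) : 0 < s -> s / 2 * (2 * s)^-1 = 4^-1.
  by move=> s_gt0; field; rewrite gt_eqF.
rewrite !quarter // -scalerDr ketbra_parallelogram scalerA.
by congr (_ *: _); rewrite fmorphV rmorph_nat /=; field.
Qed.

Lemma trpow_mix_real (alpha : R) : alpha != 0 ->
  trpow alpha ((1 / 2 : C) *: (ketbra psi + ketbra phi)) = overlap_trpow alpha r.
Proof.
move=> alpha_neq0; rewrite mix_eigen_decomposition.
rewrite (trpow_orthonormal_sum alpha_neq0 mix_eigvec_orthonormal).
  by rewrite big_ord_recl big_ord1 /mix_eigval /=.
by move=> [|[|//]] _; rewrite /mix_eigval /= divr_ge0 ?ler0n ?ltW.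
Qed.

End RealOverlap.

Lemma phase_align (z : C) : exists2 zeta, zeta * z = toC (cabs z) & zeta * conjc zeta = 1.
Proof.
have [->|z_neq0] := eqVneq z 0.
  by exists 1; rewrite ?conjc1 ?mulr1 // mulr0 /cabs Normc.normc0 rmorph0.
set a := toC (cabs z); have a_conj : conjc a = a by exact: conjc_toC.
have a_sqr : z * conjc z = a ^+ 2 by rewrite mulc_conj rmorphXn.
have a_neq0 : a != 0.
  by rewrite fmorph_eq0; apply: contra z_neq0 => /eqP/Normc.eq0_normc ->.
exists (a / z); first by rewrite divfK.
by rewrite conjcM conjcV a_conj mulrACA -invfM a_sqr -expr2 mulfV ?expf_neq0.
Qed.

Lemma trpow_mix N (psi phi : 'cV[C]_N) (alpha : R) : alpha != 0 ->
  inner psi psi = 1 -> inner phi phi = 1 ->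
  trpow alpha ((1 / 2 : C) *: (ketbra psi + ketbra phi)) =
  overlap_trpow alpha (cabs (inner psi phi)).
Proof.
move=> alpha_neq0 psi1 phi1; set r := cabs (inner psi phi).
have [r_lt1|r_ge1] := ltP r 1.
  have [zeta align unimod] := phase_align (inner psi phi).
  have -> : ketbra phi = ketbra (zeta *: phi) by rewrite ketbraZ unimod scale1r.
  apply: trpow_mix_real; rewrite ?innerZl ?innerZr ?align ?cabs_ge0 //.
  by rewrite phi1 mulr1 mulrC.
have r1 : r = 1 by apply/eqP; rewrite eq_le cabs_inner_le1.
have -> : ketbra phi = ketbra psi.
  by rewrite {1}(cabs_inner_eq1 psi1 phi1 r1) ketbraZ mulc_conj -/r r1 expr1n rmorph1 scale1r.
have half_half : (1 / 2 : C) + 1 / 2 = 1 by rewrite -mulrDl -mulr2n divff ?pnatr_eq0.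
by rewrite scalerDr -scalerDl half_half scale1r trpow_ketbra // r1 overlap_trpow1.
Qed.

Lemma S_ab_ketbra N (v : 'cV[C]_N) (alpha beta : R) : alpha != 0 -> inner v v = 1 ->
  S_ab alpha beta (ketbra v) = 0.
Proof. by move=> alpha_neq0 v1; rewrite /S_ab trpow_ketbra // powR1 subrr mul0r. Qed.

Lemma J_ab_ketbra N (psi phi : 'cV[C]_N) (alpha beta : R) : alpha != 0 ->
  inner psi psi = 1 -> inner phi phi = 1 ->
  J_ab alpha beta (ketbra psi) (ketbra phi) = overlap_entropy alpha beta (cabs (inner psi phi)).
Proof.
move=> alpha_neq0 psi1 phi1.
by rewrite /J_ab !S_ab_ketbra // mul0r !subr0 /S_ab trpow_mix.
Qed.

Lemma inner_unitary N (V : 'M[C]_N) (u w : 'cV[C]_N) : unitary V ->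
  inner (V *m u) (V *m w) = inner u w.
Proof.
by move=> /mulmx1C VV; rewrite /inner adjM -mulmxA (mulmxA (adj V)) VV mul1mx.
Qed.

Lemma inner_ket0 N : (0 < N)%N -> inner (ket0 R N) (ket0 R N) = 1.
Proof.
move=> N_gt0; rewrite innerE (bigD1 (Ordinal N_gt0)) //= big1 ?addr0.
  by rewrite !mxE /= mulr1 oppr0.
by move=> j /negbTE; rewrite -val_eqE /= !mxE => ->; rewrite mulr0.
Qed.

Lemma stabilizer_state_pure n d (phi : 'cV[C]_(d ^ n)) : (0 < d)%N ->
  stabilizer_state n d phi -> pure_state phi.
Proof.
move=> d_gt0 [V [[V_unitary _] ->]].
by rewrite /pure_state inner_unitary // inner_ket0 // expn_gt0 d_gt0.
Qed.

End Mixture.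

Theorem proposition2 (R : realType) (d n : nat) (hd : (1 < d)%N)
    (psi : 'cV[R[i]]_(d ^ n)) (hpsi : pure_state psi)
    (c : R)
    (hc_att : exists phi, stabilizer_state n d phi /\ cabs (inner psi phi) = c)
    (hc_max : forall phi, stabilizer_state n d phi -> cabs (inner psi phi) <= c)
    (alpha beta : R) (ha0 : 0 < alpha) (ha1 : alpha != 1) (hb : beta != 0) :
  let F := (((((1 + c) / 2) `^ alpha + ((1 - c) / 2) `^ alpha) `^ beta) - 1)
             / ((1 - alpha) * beta) in
  (exists phi, stabilizer_state n d phi /\
     J_ab alpha beta (ketbra psi) (ketbra phi) = F) /\
  (forall phi, stabilizer_state n d phi ->
     F <= J_ab alpha beta (ketbra psi) (ketbra phi)).
Proof.
move=> F; have alpha_neq0 : alpha != 0 by rewrite gt_eqF.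
have -> : F = overlap_entropy alpha beta c by [].
have J_stab phi : stabilizer_state n d phi ->
    J_ab alpha beta (ketbra psi) (ketbra phi) = overlap_entropy alpha beta (cabs (inner psi phi)).
  by move=> /(stabilizer_state_pure (ltnW hd)) phi1; apply: J_ab_ketbra.
have [phi0 [phi0_stab phi0_c]] := hc_att.
split; first by exists phi0; rewrite (J_stab _ phi0_stab) phi0_c.
move=> phi phi_stab; rewrite (J_stab _ phi_stab).
apply: overlap_entropy_nhomo; rewrite ?ha0 ?ha1 ?hb ?cabs_ge0 ?hc_max //.
by rewrite -phi0_c cabs_inner_le1 // (stabilizer_state_pure (ltnW hd)).
Qed.
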